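(* Let $G$ be a biconnected series-parallel graph without transitive edges, let $(s,t)$ be a separation pair of $G$, and let $G'$ be a light component of $G$ with respect to $(s,t)$. Then $G'$ is of one of the following forms: (1) $G'$ is a path $s - w - t$ of length two (a single internal vertex $w$ adjacent to both poles); (2) the internal vertices of $G'$ are a vertex $t'$ and a nonempty independent set $V_s$, where $t'$ is adjacent to $t$, and every vertex of $V_s$ is adjacent to $s$ and to $t'$ (and to no other vertex), $t'$ is not adjacent to $s$, and no vertex of $V_s$ is adjacent to $t$; (3) symmetrically, the internal vertices of $G'$ are a vertex $s'$ adjacent to $s$ and a nonempty independent set $V_t$ of vertices each adjacent to $t$ and $s'$ (and to no other vertex), with $s'$ not adjacent to $t$ and no vertex of $V_t$ adjacent to $s$. In particular, if $G'$ has more than one internal vertex, then the set $V_s$ of internal neighbours of $s$ and the set $V_t$ of internal neighbours of $t$ are disjoint independent sets covering all internal vertices, and $|V_s|=1$ or $|V_t|=1$.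
   Context: A biconnected graph is series-parallel if it contains no subdivision of $K_4$. A separation pair of a biconnected graph $G$ is a pair $(s,t)$ of vertices with $G-s-t$ disconnected; a transitive edge is an edge joining the two vertices of a separation pair. A component w.r.t. $(s,t)$ is the subgraph induced by $s$, $t$ and the vertex set of one connected component of $G-s-t$; $s,t$ are its poles and the other vertices are internal vertices. A component is heavy if it has an internal vertex adjacent to neither $s$ nor $t$, and light otherwise (i.e., every internal vertex is adjacent to $s$ or to $t$). *)

(* A finite simple graph is a symmetric irreflexive
   relation e on a finType T. *)
From mathcomp Require Import all_boot.
Set Implicit Arguments. Unset Strict Implicit. Unset Printing Implicit Defensive.

Section Graphs.
Variables (T : finType) (e : rel T).

Definition induced_rel (S : {set T}) : rel T :=
  [rel x y | [&& e x y, x \in S & y \in S]].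

Definition connected_on (S : {set T}) : Prop :=
  forall x y, x \in S -> y \in S -> connect (induced_rel S) x y.

Definition biconnected : Prop :=
  connected_on [set: T] /\ forall v : T, connected_on [set~ v].

Definition sep_pair (s t : T) : Prop :=
  s != t /\ ~ connected_on (~: [set s; t]).

Definition transitive_edge (u v : T) : Prop := e u v /\ sep_pair u v.

(* simple path from x to y with vertex sequence x :: p *)
Definition gpath (x y : T) (p : seq T) : bool :=
  [&& path e x p, last x p == y & uniq (x :: p)].

Definition inner (x : T) (p : seq T) : seq T := behead (belast x p).

Definition has_K4_subdivision : Prop :=
  exists (b : 'I_4 -> T) (P : 'I_4 -> 'I_4 -> seq T),
    injective b /\
    (forall i j : 'I_4, i < j -> gpath (b i) (b j) (P i j)) /\
    (forall (i j k : 'I_4) v, i < j -> v \in inner (b i) (P i j) -> v != b k) /\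
    (forall (i j k l : 'I_4) v, i < j -> k < l -> (i, j) != (k, l) ->
        v \in inner (b i) (P i j) -> v \notin inner (b k) (P k l)).

(* series-parallel (for biconnected graphs): no subdivision of K4 *)
Definition series_parallel : Prop := ~ has_K4_subdivision.

(* C is the vertex set of a connected component of G - s - t; the
   component w.r.t. (s,t) is G[C :|: [set s; t]], C its internal vertices *)
Definition component_internal (s t : T) (C : {set T}) : Prop :=
  exists2 x, x \in ~: [set s; t] &
    C = [set y in ~: [set s; t] | connect (induced_rel (~: [set s; t])) x y].

Definition light (s t : T) (C : {set T}) : Prop :=
  forall v, v \in C -> e v s || e v t.

Definition independent (S : {set T}) : Prop :=
  forall u v, u \in S -> v \in S -> ~~ e u v.

(* form (2) of the claim, with the roles of s and t given *)
Definition fan_form (s t : T) (C : {set T}) : Prop :=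
  exists (t' : T) (Vs : {set T}),
    [/\ C = t' |: Vs, t' \notin Vs, Vs != set0 & independent Vs] /\
    e t' t /\ ~~ e t' s /\
        forall v, v \in Vs ->
          [/\ e v s, e v t', ~~ e v t & forall u, e v u -> u = s \/ u = t'].

End Graphs.

From mathcomp Require Import all_boot.
Set Implicit Arguments. Unset Strict Implicit. Unset Printing Implicit Defensive.

(* Every component of G - {s,t} is adjacent to both poles, so besides C there is a
   second component D giving an s-t path outside C.  The basic obstruction: a cycle
   through x1 x2 x3 together with a connected set K off the cycle that sees all three
   of them yields a subdivided K4 (three disjoint routes in K to a common centre).
   Without transitive edges, deleting a triangle leaves a component seeing all its
   corners; so no triangle misses a vertex of G, and the internal neighbourhoods
   Vs, Vt of the poles are independent.  A vertex of C adjacent to both poles closes the cycle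
   s v t through D, and the rest of C is a hub for it; hence C is that single
   vertex or Vs, Vt are disjoint, and by lightness they cover C.  If both had two
   elements, the connected bipartite graph C would contain an alternating path
   b' a b a', which again yields a K4 using D.  Finally, if Vt = {t'}, a vertex of
   Vs not adjacent to t' would only see s, making s a cut vertex. *)

Section InducedConnectivity.
Variables (T : finType) (e : rel T).
Hypothesis e_sym : symmetric e.

Definition component_in (S : {set T}) (u : T) : {set T} :=
  [set y in S | connect (induced_rel e S) u y].

Lemma induced_rel_sym (S : {set T}) : symmetric (induced_rel e S).
Proof.
by move=> x y; rewrite /induced_rel /= e_sym; case: (x \in S); case: (y \in S); rewrite ?andbF.
Qed.

Lemma connect_induced_sym (S : {set T}) : connect_sym (induced_rel e S).
Proof. exact/sym_connect_sym/induced_rel_sym. Qed.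

Lemma connect_inducedS (S S' : {set T}) x y :
  S \subset S' -> connect (induced_rel e S) x y -> connect (induced_rel e S') x y.
Proof.
move=> /subsetP sSS'; apply: connect_sub => a b /and3P[eab aS bS].
by apply: connect1; rewrite /induced_rel /= eab !sSS'.
Qed.

Lemma connect_induced_closed (S A : {set T}) x y :
  (forall a b, a \in A -> induced_rel e S a b -> b \in A) ->
  connect (induced_rel e S) x y -> x \in A -> y \in A.
Proof.
move=> clA /connectP[p + ->]; elim: p x => //= z p IHp x /andP[exz pz] xA.
exact: IHp pz (clA _ _ xA exz).
Qed.

Lemma path_induced (S : {set T}) x p :
  path (induced_rel e S) x p -> path e x p /\ {subset p <= S}.
Proof.
elim: p x => [|y p IHp] x //=; case/andP=> /and3P[exy _ yS] /IHp[pp pS].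
by split=> [|z]; rewrite ?exy // inE => /predU1P[->|/pS].
Qed.

Lemma component_in_sub (S : {set T}) u : component_in S u \subset S.
Proof. by apply/subsetP=> y; rewrite inE => /andP[]. Qed.

Lemma component_in_id (S : {set T}) u : u \in S -> u \in component_in S u.
Proof. by move=> uS; rewrite inE uS connect0. Qed.

Lemma component_in_closed (S : {set T}) u y z :
  y \in component_in S u -> z \in S -> e y z -> z \in component_in S u.
Proof.
rewrite !inE => /andP[yS uy] zS eyz; rewrite zS.
by apply: connect_trans uy (connect1 _); rewrite /induced_rel /= eyz yS zS.
Qed.

Lemma component_in_connected (S : {set T}) u : connected_on e (component_in S u).
Proof.
have closedC y z : y \in component_in S u ->
    induced_rel e S y z -> induced_rel e (component_in S u) y z.
  move=> yC /and3P[eyz _ zS]; apply/and3P; split=> //.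
  exact: component_in_closed eyz.
move=> x y xC; rewrite inE => /andP[_ uy]; move: (xC); rewrite inE => /andP[_ ux].
have: connect (induced_rel e S) x y.
  by apply: connect_trans uy; rewrite connect_induced_sym.
case/connectP=> p + ->; elim: p x xC {ux} => [|z p IHp] x xC /=; first by move=> _; apply: connect0.
case/andP=> exz pz; have ezx := closedC _ _ xC exz.
by apply: connect_trans (connect1 ezx) (IHp _ _ pz); case/and3P: ezx.
Qed.

Lemma component_in_eq (S : {set T}) u v :
  v \in component_in S u -> component_in S v = component_in S u.
Proof.
rewrite inE => /andP[vS uv]; apply/setP=> y; rewrite !inE; case: (y \in S) => //=.
apply/idP/idP; first exact: connect_trans.
by apply: connect_trans; rewrite connect_induced_sym.
Qed.

Lemma component_inS (S S' : {set T}) u0 u :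
  S' \subset S -> u \in component_in S u0 -> component_in S' u \subset component_in S u0.
Proof.
move=> sS'S; rewrite inE => /andP[uS u0u]; apply/subsetP=> y; rewrite !inE.
case/andP=> yS' uy; rewrite (subsetP sS'S _ yS').
exact: connect_trans u0u (connect_inducedS sS'S uy).
Qed.

Lemma connected_on1 x : connected_on e [set x].
Proof. by move=> a b /set1P-> /set1P->; apply: connect0. Qed.

Lemma connected_onU (A B : {set T}) a b :
  connected_on e A -> connected_on e B -> a \in A -> b \in B -> e a b ->
  connected_on e (A :|: B).
Proof.
move=> cA cB aA bB eab.
have [sA sB] := (subsetUl A B, subsetUr A B).
have ab : connect (induced_rel e (A :|: B)) a b.
  by apply: connect1; rewrite /induced_rel /= eab !inE aA bB orbT.
have csym := connect_induced_sym (A :|: B).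
have toa x : x \in A -> connect (induced_rel e (A :|: B)) x a.
  by move=> xA; apply: connect_inducedS sA (cA _ _ xA aA).
have tob x : x \in B -> connect (induced_rel e (A :|: B)) x b.
  by move=> xB; apply: connect_inducedS sB (cB _ _ xB bB).
move=> x y /setUP[xA|xB] /setUP[yA|yB].
- exact: connect_inducedS sA (cA _ _ xA yA).
- by apply: connect_trans (toa _ xA) (connect_trans ab _); rewrite csym tob.
- apply: connect_trans (tob _ xB) _; rewrite csym in ab.
  by apply: connect_trans ab _; rewrite csym toa.
- exact: connect_inducedS sB (cB _ _ xB yB).
Qed.

Lemma not_connected_of_closed (X K : {set T}) u w :
  u \in K -> w \notin K -> u \notin X -> w \notin X ->
  (forall y z, y \in K -> e y z -> (z \in K) || (z \in X)) ->
  ~ connected_on e (~: X).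
Proof.
move=> uK wK uX wX clK conX; have uw : connect (induced_rel e (~: X)) u w.
  by apply: conX; rewrite inE.
apply: (negP wK); apply: connect_induced_closed uw uK => a b aK /and3P[eab _].
by rewrite inE; case/orP: (clK _ _ aK eab) => // ->.
Qed.

Lemma component_adj_target (S X : {set T}) u v :
  connect (induced_rel e S) u v -> u \notin X -> v \in X -> S :&: X \subset [set v] ->
  exists2 k, k \in component_in (~: X) u & e k v.
Proof.
set K := component_in _ u => uv uX vX sSX.
case: (boolP [exists k in K, e k v]) => [/exists_inP//|/exists_inPn noK].
suff: v \in K by move/(subsetP (component_in_sub _ _)); rewrite inE vX.
apply: (connect_induced_closed _ uv); last by apply: component_in_id; rewrite inE.
move=> y z yK /and3P[eyz _ zS]; case zX: (z \in X).
  have zv : z = v by apply/set1P; rewrite (subsetP sSX) // inE zS zX.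
  by move: (noK y yK); rewrite -zv eyz.
by rewrite (component_in_closed yK) // inE zX.
Qed.

Definition route (K : {set T}) a c W :=
  [/\ path e a W, last a W = c, uniq (a :: W) & {subset a :: W <= K}].

Lemma connect_route (K : {set T}) a b :
  connect (induced_rel e K) a b -> a \in K -> exists q, route K a b q.
Proof.
move=> /connectP[p pth ->] aK; case: (shortenP pth) => q pq uq _.
have [pe qK] := path_induced pq.
by exists q; split=> // x; rewrite inE => /predU1P[->|/qK].
Qed.

Lemma gpath_through (K : {set T}) x y k1 k2 :
  connected_on e K -> x \notin K -> y \notin K -> x != y ->
  k1 \in K -> e x k1 -> k2 \in K -> e k2 y ->
  exists p, gpath e x y p /\ {subset inner x p <= K}.
Proof.
move=> cK xK yK xy k1K ex k2K ey.
have [q [pq lq uq sq]] := connect_route (cK _ _ k1K k2K) k1K.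
have [xq yq] : x \notin k1 :: q /\ y \notin k1 :: q.
  by split; apply/negP=> /sq; apply/negP.
exists (k1 :: rcons q y); split; last by rewrite /inner /= belast_rcons.
rewrite /gpath -rcons_cons [path _ _ _]rcons_path /= ex pq lq ey last_rcons eqxx /=.
have: uniq (x :: rcons (k1 :: q) y).
  by rewrite cons_uniq rcons_uniq mem_rcons inE negb_or xy xq uq yq.
by rewrite rcons_cons.
Qed.

Lemma route_last_notin (K : {set T}) a c W : route K a c W -> c \notin belast a W.
Proof. by case=> _ <-; rewrite lastI rcons_uniq => /andP[]. Qed.

Lemma route_to_set (K Z : {set T}) r q :
  path e r q -> uniq (r :: q) -> {subset r :: q <= K} -> last r q \in Z ->
  exists c W, [/\ c \in Z, route K r c W & {subset belast r W <= ~: Z}] /\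
              {subset W <= q}.
Proof.
have here r' q' : {subset r' :: q' <= K} -> r' \in Z -> exists c W,
    [/\ c \in Z, route K r' c W & {subset belast r' W <= ~: Z}] /\ {subset W <= q'}.
  move=> sq' rZ; exists r', [::]; split=> //; split=> //.
  by split=> // v; rewrite inE => /eqP->; apply/sq'/mem_head.
elim: q r => [|y q IHq] r pq uq sq lq; first exact: here.
case rZ: (r \in Z); first exact: here.
case/andP: pq => ery pq; case/andP: uq => ryq uq.
have [|c [W [[cZ [pW lW uW sW] bW] Wq]]] := IHq y pq uq _ lq.
  by move=> v vq; apply: sq; rewrite inE vq orbT.
have yWq : {subset y :: W <= y :: q}.
  by move=> v; rewrite !inE => /predU1P[->|/Wq->]; rewrite ?eqxx ?orbT.
exists c, (y :: W); split=> //; split=> //; last first.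
  by move=> v /= /predU1P[->|/bW]; rewrite ?inE ?rZ.
split=> //; first by rewrite /= ery.
  by rewrite cons_uniq uW andbT; apply: contra ryq => /yWq.
by move=> v; rewrite inE => /predU1P[->|/sW//]; apply/sq/mem_head.
Qed.

Lemma route_rev (K : {set T}) a c W : route K a c W ->
  route K c a (rev (belast a W)) /\ belast c (rev (belast a W)) =i W.
Proof.
case=> pW <- uW sW; set R := rev (belast a W).
have ER : last a W :: R = rcons (rev W) a by rewrite /R -rev_rcons -lastI rev_cons.
split; last by move=> v; move: ER; rewrite lastI => /rcons_inj[-> _]; rewrite mem_rev.
split.
- by rewrite /R rev_path; apply: sub_path pW => x y; rewrite e_sym.
- by have := congr1 (last (last a W)) ER; rewrite /= last_rcons.
- by rewrite ER -rev_cons rev_uniq.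
- by move=> v; rewrite ER mem_rcons inE mem_rev => vW; apply: sW; rewrite inE.
Qed.

Lemma tripod (K : {set T}) p1 p2 p3 :
  connected_on e K -> p1 \in K -> p2 \in K -> p3 \in K ->
  exists c W1 W2 W3, [/\ route K p1 c W1, route K p2 c W2 & route K p3 c W3] /\
   [/\ [disjoint belast p1 W1 & belast p2 W2],
       [disjoint belast p1 W1 & belast p3 W3] &
       [disjoint belast p2 W2 & belast p3 W3]].
Proof.
move=> cK k1 k2 k3.
have [q [pq lq uq sq]] := connect_route (cK _ _ k1 k2) k1.
have [q3 [pq3 lq3 uq3 sq3]] := connect_route (cK _ _ k3 k1) k3.
have [|c [W3 [[cZ r3 bW3] _]]] :=
  route_to_set pq3 uq3 sq3 (_ : last p3 q3 \in [set x in p1 :: q]).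
  by rewrite lq3 inE mem_head.
move: cZ; rewrite inE => cq.
case: (splitPl cq) pq lq uq sq bW3 => Q1 Q2 lQ1.
rewrite cat_path last_cat lQ1 => /andP[pQ1 pQ2] lq uq sq bW3.
move: (uq); rewrite -cat_cons cat_uniq => /and3P[uQ1 /hasPn dQ uQ2].
have cQ1 : c \in p1 :: Q1 by rewrite -lQ1 mem_last.
have uQ2' : uniq (c :: Q2) by rewrite /= uQ2 andbT; apply/negP=> /dQ; rewrite cQ1.
have sQ1 : {subset p1 :: Q1 <= K} by move=> v vQ1; apply: sq; rewrite -cat_cons mem_cat vQ1.
have sQ2 : {subset c :: Q2 <= K}.
  move=> v; rewrite inE => /predU1P[->|vQ2]; apply: sq;
  by rewrite -cat_cons mem_cat ?cQ1 ?vQ2 ?orbT.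
have [r2 bQ2] : route K p2 c (rev (belast c Q2)) /\ belast p2 (rev (belast c Q2)) =i Q2.
  by rewrite -lq; apply: route_rev.
have inZ v : v \in belast p1 Q1 -> v \in p1 :: Q1 ++ Q2.
  by move=> /mem_belast vQ1; rewrite -cat_cons mem_cat vQ1.
exists c, Q1, (rev (belast c Q2)), W3; do !split => //;
  apply/pred0P => v /=; apply/negbTE/andP => -[].
- by rewrite bQ2 => /mem_belast v1 /dQ; rewrite v1.
- by move=> /inZ vZ /bW3; rewrite in_setC inE vZ.
- by rewrite bQ2 => vQ2 /bW3; rewrite !inE mem_cat vQ2 !orbT.
Qed.

End InducedConnectivity.

Section K4Subdivisions.
Variables (T : finType) (e : rel T).
Hypothesis e_sym : symmetric e.

(* The [uniq] hypothesis says at once that the branch vertices are distinct and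
   that the interiors of the six paths are pairwise disjoint and avoid them. *)
Lemma K4_subdivision_of_paths b0 b1 b2 b3 p01 p02 p03 p12 p13 p23 :
  gpath e b0 b1 p01 -> gpath e b0 b2 p02 -> gpath e b0 b3 p03 ->
  gpath e b1 b2 p12 -> gpath e b1 b3 p13 -> gpath e b2 b3 p23 ->
  uniq (inner b0 p01 ++ inner b0 p02 ++ inner b0 p03 ++ inner b1 p12 ++
        inner b1 p13 ++ inner b2 p23 ++ [:: b0; b1; b2; b3]) ->
  has_K4_subdivision e.
Proof.
move=> g01 g02 g03 g12 g13 g23 U.
exists (fun i : 'I_4 => nth b0 [:: b0; b1; b2; b3] i).
exists (fun i j : 'I_4 => nth [::] (nth [::] [:: [:: [::]; p01; p02; p03];
   [:: [::]; [::]; p12; p13]; [:: [::]; [::]; [::]; p23]] i) j).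
have Ub := U; do 6 (rewrite cat_uniq in Ub; case/and3P: Ub => _ _ Ub).
move: U; rewrite !cat_uniq !has_cat /= !negb_or ?inE ?negb_or.
move=> H; repeat match goal with | h : is_true (_ && _) |- _ => case/andP: h => ? ? end.
split; [|split; [|split]].
- move=> i j /eqP; rewrite (@nth_uniq _ b0 [:: b0; b1; b2; b3]) ?ltn_ord // => /eqP.
  exact: val_inj.
- move=> [[|[|[|[|i]]]] Hi] [[|[|[|[|j]]]] Hj] //=.
  all: try by rewrite !ltnS ltn0 in Hi.
  all: try by rewrite !ltnS ltn0 in Hj.
- move=> [[|[|[|[|i]]]] Hi] [[|[|[|[|j]]]] Hj] [[|[|[|[|k]]]] Hk] v //= _ vin.
  all: try by rewrite !ltnS ltn0 in Hi.
  all: try by rewrite !ltnS ltn0 in Hj.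
  all: try by rewrite !ltnS ltn0 in Hk.
  all: try by move: vin; rewrite /inner /= in_nil.
  all: try (apply/negP => /eqP E).
  all: subst; try match goal with h : is_true (_ \notin _) |- _ => by rewrite vin in h end.
- move=> [[|[|[|[|i]]]] Hi] [[|[|[|[|j]]]] Hj] [[|[|[|[|k]]]] Hk] [[|[|[|[|l]]]] Hl] v //= _ _ _ v1.
  all: try by rewrite !ltnS ltn0 in Hi.
  all: try by rewrite !ltnS ltn0 in Hj.
  all: try by rewrite !ltnS ltn0 in Hk.
  all: try by rewrite !ltnS ltn0 in Hl.
  all: try by move: v1; rewrite /inner /= in_nil.
  all: apply/negP => v2.
  all: try by move: v2; rewrite /inner /= in_nil.
  all: match goal with H : is_true (~~ has _ _) |- _ =>
         by move/hasP: H; apply; eexists; eassumption end.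
Qed.

Lemma inner_props (x : T) p : uniq (x :: p) ->
  [/\ uniq (inner x p), x \notin inner x p & last x p \notin inner x p].
Proof.
case: p => [|y p] //; rewrite /inner cons_uniq => /andP[xn up]; split=> /=.
- by move: up; rewrite lastI rcons_uniq => /andP[].
- by apply: contra xn => /mem_belast.
- by move: up; rewrite lastI rcons_uniq => /andP[].
Qed.

Lemma gpath_edge x y : e x y -> x != y -> gpath e x y [:: y].
Proof. by move=> exy xy; rewrite /gpath /= exy eqxx /= inE xy. Qed.

Lemma gpath_route (K : {set T}) x k c W :
  e x k -> x \notin K -> route e K k c W -> gpath e x c (k :: W).
Proof.
move=> exk xK [pW lW uW sW]; rewrite /gpath /= exk pW lW eqxx /=.
rewrite -[_ && uniq W]/(uniq (k :: W)) uW andbT; apply/negP => /sW.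
by rewrite (negbTE xK).
Qed.

(* The branch vertices are x1, x2, x3 and the centre of a tripod in K. *)
Lemma K4_of_cycle_hub x1 x2 x3 p (K : {set T}) :
  e x1 x2 -> e x2 x3 -> x1 != x2 -> x2 != x3 -> x1 != x3 ->
  gpath e x1 x3 p -> x2 \notin inner x1 p -> [disjoint inner x1 p & K] ->
  connected_on e K -> x1 \notin K -> x2 \notin K -> x3 \notin K ->
  (exists2 k, k \in K & e x1 k) -> (exists2 k, k \in K & e x2 k) ->
  (exists2 k, k \in K & e x3 k) ->
  has_K4_subdivision e.
Proof.
move=> e12 e23 n12 n23 n13 gp x2p dpK cK x1K x2K x3K [k1 k1K e1] [k2 k2K e2] [k3 k3K e3].
have [c [W1 [W2 [W3 [[r1 r2 r3] [d12 d13 d23]]]]]] := tripod e_sym cK k1K k2K k3K.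
apply: (@K4_subdivision_of_paths x1 x2 x3 c [:: x2] p (k1 :: W1) [:: x3] (k2 :: W2) (k3 :: W3)).
- exact: gpath_edge.
- exact: gp.
- exact: gpath_route r1.
- exact: gpath_edge.
- exact: gpath_route r2.
- exact: gpath_route r3.
have [ip x1p x3p] : [/\ uniq (inner x1 p), x1 \notin inner x1 p & x3 \notin inner x1 p].
  by move: gp => /and3P[_ /eqP <- /inner_props].
have cK' : c \in K by case: r1 => _ <- _ sW; apply/sW/mem_last.
have bK k W : route e K k c W -> {subset belast k W <= K}.
  by case=> _ _ _ sW v /mem_belast /sW.
have bu k W : route e K k c W -> uniq (belast k W).
  by case=> _ _ + _; rewrite lastI rcons_uniq => /andP[].
have nK x k W : x \notin K -> route e K k c W -> x \notin belast k W.
  by move=> xK r; apply: contra xK => /(bK _ _ r).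
have xc x : x \notin K -> x != c by apply: contraNneq => ->.
have cp : c \notin inner x1 p by apply: contraL cK' => /(disjointFr dpK) ->.
have dK k W : route e K k c W -> [disjoint belast k W & inner x1 p].
  by move=> r; rewrite disjoint_sym; apply: disjointWr dpK; apply/subsetP/bK/r.
rewrite /inner /= !cat_uniq !has_cat /= !negb_or -!disjoint_has.
rewrite -[behead _]/(inner x1 p).
repeat (apply/andP; split) => //; first [
  exact: bu r1 | exact: bu r2 | exact: bu r3 | exact: dK r1 | exact: dK r2 | exact: dK r3 |
  exact: route_last_notin r1 | exact: route_last_notin r2 | exact: route_last_notin r3 |
  exact: nK r1 | exact: nK r2 | exact: nK r3 | exact: xc | by rewrite disjoint_sym ].
Qed.

(* Otherwise a would be a cut vertex. *)
Lemma component_adj_pole a b y0 :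
  connected_on e [set~ a] -> a != b -> y0 \in ~: [set a; b] ->
  exists2 k, k \in component_in e (~: [set a; b]) y0 & e b k.
Proof.
set K := component_in e _ y0 => ca ab y0ab.
case: (boolP [exists k in K, e b k]) => [/exists_inP//|/exists_inPn noK].
exfalso; apply: (@not_connected_of_closed _ e [set a] K y0 b _ _ _ _ _ ca).
- exact: component_in_id.
- by apply/negP => /(subsetP (component_in_sub _ _ _)); rewrite !inE eqxx orbT.
- by move: y0ab; rewrite !inE negb_or => /andP[].
- by rewrite inE eq_sym.
move=> y z yK eyz; case zab: (z \in ~: [set a; b]).
  by rewrite (component_in_closed yK zab eyz).
move: zab; rewrite !inE => /negbFE /orP[->|/eqP zb]; first by rewrite orbT.
by move: (noK y yK); rewrite -zb e_sym eyz.
Qed.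

Lemma component_adj_poles a b y0 :
  biconnected e -> a != b -> y0 \in ~: [set a; b] ->
  (exists2 k, k \in component_in e (~: [set a; b]) y0 & e a k) /\
  (exists2 k, k \in component_in e (~: [set a; b]) y0 & e b k).
Proof.
move=> [_ cut] ab y0ab; split; last exact: component_adj_pole.
rewrite setUC; apply: component_adj_pole; rewrite 1?eq_sym // setUC //.
Qed.

Hypothesis no_transitive_edge : forall u v, ~ transitive_edge e u v.

(* Otherwise {b, c} would separate w from a, and bc would be a transitive edge. *)
Lemma component_adj_of_edge (X : {set T}) a b c w :
  e b c -> b != c -> w \notin X -> a \in X -> b \in X -> c \in X ->
  a \notin [set b; c] -> X :\ a \subset [set b; c] ->
  exists2 k, k \in component_in e (~: X) w & e a k.
Proof.
set K := component_in e _ w => ebc bc wX aX bX cX abc sXa.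
case: (boolP [exists k in K, e a k]) => [/exists_inP//|/exists_inPn noK].
exfalso; apply: (no_transitive_edge (conj ebc (conj bc _))).
apply: (@not_connected_of_closed _ e [set b; c] K w a).
- by apply: component_in_id; rewrite inE.
- by apply/negP => /(subsetP (component_in_sub _ _ _)); rewrite inE aX.
- by apply: contra wX; rewrite !inE => /orP[] /eqP->.
- exact: abc.
move=> y z yK eyz; case zX: (z \in X); last by rewrite (component_in_closed yK _ eyz) // inE zX.
case: (eqVneq z a) => [za|zNa]; first by move: (noK y yK); rewrite -za e_sym eyz.
by rewrite (subsetP sXa) ?orbT // !inE zNa.
Qed.

Hypothesis K4_free : ~ has_K4_subdivision e.

Lemma no_triangle x y z w :
  irreflexive e -> e x y -> e y z -> e x z -> w \notin [set x; y; z] -> False.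
Proof.
move=> irr exy eyz exz wX.
have neq u v : e u v -> u != v by apply: contraTneq => ->; rewrite irr.
set X := [set x; y; z]; set K := component_in e (~: X) w.
have XE u : (u \in X) = [|| u == x, u == y | u == z] by rewrite !inE orbA.
have hub a b c : e b c -> a != b -> a != c ->
    (forall u, (u \in X) = [|| u == a, u == b | u == c]) -> exists2 k, k \in K & e a k.
  move=> ebc ab ac Xabc; apply: (component_adj_of_edge ebc) => //;
    rewrite ?Xabc ?eqxx ?orbT ?(neq _ _ ebc) //.
  - by rewrite !inE negb_or ab.
  - by apply/subsetP=> u; rewrite in_setD1 Xabc !inE => /andP[/negbTE->].
have [kx kxK ekx] := hub x y z eyz (neq _ _ exy) (neq _ _ exz) XE.
have [ky kyK eky] : exists2 k, k \in K & e y k.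
  apply: (hub y x z exz); [rewrite eq_sym; exact: neq | exact: neq | move=> u; rewrite XE].
  by case: (u == x); case: (u == y).
have [kz kzK ekz] : exists2 k, k \in K & e z k.
  apply: (hub z x y exy); [rewrite eq_sym; exact: neq | rewrite eq_sym; exact: neq |].
  move=> u; rewrite XE.
  by case: (u == x); case: (u == y); case: (u == z).
have notK u : u \in X -> u \notin K.
  by move=> uX; apply/negP => /(subsetP (component_in_sub _ _ _)); rewrite inE uX.
apply: K4_free; apply: (@K4_of_cycle_hub x y z [:: z] K) => //;
  try exact: neq; try (apply: notK; rewrite XE eqxx ?orbT //).
- exact/gpath_edge/neq.
- exact: disjoint0.
- exact: component_in_connected.
- by exists kx.
- by exists ky.
- by exists kz.
Qed.

Lemma nbrs_independent (C : {set T}) p w :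
  irreflexive e -> w \notin C -> w != p -> independent e [set v in C | e p v].
Proof.
move=> irr wC wp u v; rewrite !inE => /andP[uC epu] /andP[vC epv].
apply/negP => euv; apply: (no_triangle (w := w) irr epu euv epv).
by rewrite !inE !negb_or wp; apply/andP; split; apply: contraNneq wC => ->.
Qed.

(* Either every a in A sees every b in B, or a path from some b to a non-neighbour
   a alternates between the two sides and is long enough. *)
Lemma alternating_path4 (A B : {set T}) :
  connected_on e (A :|: B) -> [disjoint A & B] -> independent e A -> independent e B ->
  1 < #|A| -> 1 < #|B| ->
  exists a a' b b', [/\ a \in A, a' \in A, b \in B & b' \in B] /\
                    [/\ a != a', b != b', e a b, e a b' & e b a'].
Proof.
move=> cAB dAB iA iB /card_gt1P[a0 [a1 [a0A a1A a01]]] /card_gt1P[b0 [b1 [b0B b1B b01]]].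
case: (boolP [forall a in A, forall b in B, e a b]) => [/forall_inP adj|].
  have eAB a b : a \in A -> b \in B -> e a b by move=> /adj /forall_inP; apply.
  exists a0, a1, b0, b1; do 2!split=> //; last rewrite e_sym; exact: eAB.
case/forall_inPn=> a aA /forall_inPn[b bB nab].
have inAB x : x \in A :|: B -> x \in A \/ x \in B by case/setUP; [left|right].
have toA x y : y \in B -> x \in A :|: B -> e y x -> x \in A.
  by move=> yB /inAB[//|xB] eyx; move: (iB _ _ yB xB); rewrite eyx.
have toB x y : y \in A -> x \in A :|: B -> e y x -> x \in B.
  by move=> yA /inAB[xA|//] eyx; move: (iA _ _ yA xA); rewrite eyx.
have [bAB aAB] : b \in A :|: B /\ a \in A :|: B by rewrite !inE aA bB orbT.
have [q [pq lq uq sq]] := connect_route (cAB _ _ bAB aAB) bAB.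
case: q pq lq uq sq => [|x1 [|x2 [|x3 q]]] /=.
- by move=> _ ba; move: (disjointFr dAB aA); rewrite -ba bB.
- by rewrite andbT => ebx1 x1a; move: nab; rewrite -x1a e_sym ebx1.
- case/and3P=> ebx1 ex1x2 _ x2a _ sq.
  have x1A : x1 \in A by apply: toA ebx1; rewrite ?sq ?inE ?eqxx ?orbT.
  by move: (iA _ _ x1A aA); rewrite -x2a ex1x2.
case/and4P=> ebx1 ex1x2 ex2x3 _ _ uq sq.
have x1A : x1 \in A by apply: toA ebx1; rewrite ?sq ?inE ?eqxx ?orbT.
have x2B : x2 \in B by apply: toB ex1x2; rewrite ?sq ?inE ?eqxx ?orbT.
have x3A : x3 \in A by apply: toA ex2x3; rewrite ?sq ?inE ?eqxx ?orbT.
case/and5P: uq => bq x1q _ _ _.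
exists x1, x3, x2, b; split=> //; split=> //; last by rewrite e_sym.
- by apply: contraNneq x1q => ->; rewrite !inE eqxx orbT.
- by apply: contraNneq bq => <-; rewrite !inE eqxx orbT.
Qed.

Lemma fan_form_of_partition a b (C : {set T}) :
  connected_on e [set~ a] -> a \notin C -> b \notin C ->
  (forall v u, v \in C -> e v u -> [|| u \in C, u == a | u == b]) ->
  [disjoint [set v in C | e a v] & [set v in C | e b v]] ->
  independent e [set v in C | e a v] ->
  [set v in C | e a v] :|: [set v in C | e b v] = C ->
  [set v in C | e a v] != set0 -> #|[set v in C | e b v]| == 1 ->
  fan_form e a b C.
Proof.
set Va := [set v in C | e a v]; set Vb := [set v in C | e b v].
move=> ca aC bC nb dis ind UC ne /cards1P[b' Vb'].
have b'Vb : b' \in Vb by rewrite Vb' inE.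
have notboth v : v \in Va -> v \in Vb -> False.
  by move=> va vb; move: (disjointFr dis va); rewrite vb.
move: (b'Vb); rewrite inE => /andP[b'C eb'].
exists b', Va; split; [split|split; [|split]].
- by rewrite -UC Vb' setUC.
- by apply/negP => /notboth; apply.
- exact: ne.
- exact: ind.
- by rewrite e_sym.
- by apply/negP => eb'a; apply: (notboth b') => //; rewrite inE b'C e_sym.
move=> v vVa; move: (vVa); rewrite inE => /andP[vC eav].
have nvb : ~~ e v b by apply/negP => evb; apply: (notboth v) => //; rewrite inE vC e_sym.
have nbrs u : e v u -> u = a \/ u = b'.
  move=> evu; case/or3P: (nb v u vC evu) => [uC|/eqP->|/eqP E];
    [|by left|by move: evu; rewrite E (negbTE nvb)].
  have : u \in Va :|: Vb by rewrite UC.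
  rewrite inE => /orP[uVa|]; first by move: (ind _ _ vVa uVa); rewrite evu.
  by rewrite Vb' inE => /eqP->; right.
split => //; first by rewrite e_sym.
case: (boolP (e v b')) => // nvb'.
exfalso; apply: (@not_connected_of_closed _ e [set a] [set v] v b) => //.
- by rewrite inE.
- by rewrite inE; apply/negP => /eqP E; move: bC; rewrite E vC.
- by rewrite inE; apply/negP => /eqP E; move: aC; rewrite -E vC.
- rewrite inE eq_sym; apply/negP => /eqP E; apply: (notboth b') => //.
  by rewrite inE b'C E.
move=> y z; rewrite inE => /eqP -> evz; case: (nbrs z evz).
  by move=> ->; rewrite !inE eqxx orbT.
by move=> E; move: evz; rewrite E (negbTE nvb').
Qed.

End K4Subdivisions.

Section LightComponent.
Variables (T : finType) (e : rel T) (s t : T) (C : {set T}).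
Hypotheses (e_sym : symmetric e) (e_irr : irreflexive e).
Hypotheses (e_biconnected : biconnected e) (e_K4_free : series_parallel e).
Hypothesis no_transitive_edge : forall u v, ~ transitive_edge e u v.
Hypotheses (st_sep : sep_pair e s t) (C_component : component_internal e s t C).

Local Notation S := (~: [set s; t]).

Lemma st_neq : s != t. Proof. by case: st_sep. Qed.

Lemma C_eq u : u \in C -> C = component_in e S u.
Proof. by case: C_component => x0 _ -> uC; rewrite (component_in_eq e_sym uC). Qed.

Lemma C_sub : C \subset S.
Proof. by case: C_component => x0 _ ->; apply: component_in_sub. Qed.

Lemma C_connected : connected_on e C.
Proof. by case: C_component => x0 _ ->; exact: component_in_connected. Qed.

Lemma poles_notin_C : s \notin C /\ t \notin C.
Proof. by split; apply/negP => /(subsetP C_sub); rewrite !inE eqxx ?orbT. Qed.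

Lemma C_nbr v u : v \in C -> e v u -> [|| u \in C, u == s | u == t].
Proof.
move=> vC evu; case uS: (u \in S).
  by rewrite (C_eq vC) (component_in_closed _ uS evu) // -C_eq.
by move: uS; rewrite !inE => /negbFE ->; rewrite orbT.
Qed.

Lemma C_adj_poles : (exists2 k, k \in C & e s k) /\ (exists2 k, k \in C & e t k).
Proof.
by case: C_component => x0 x0S ->; apply: component_adj_poles; rewrite ?st_neq.
Qed.

Lemma other_component : exists2 D : {set T}, connected_on e D &
  [/\ [disjoint D & C], s \notin D, t \notin D,
      exists2 k, k \in D & e s k & exists2 k, k \in D & e t k].
Proof.
have [d dS dC] : exists2 d, d \in S & d \notin C.
  case: (boolP [exists d in S, d \notin C]) => [/exists_inP//|/exists_inPn noD].
  case: st_sep => _ []; suff -> : S = C by exact: C_connected.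
  apply/eqP; rewrite eqEsubset C_sub andbT; apply/subsetP => z zS.
  by move: (noD z zS); rewrite negbK.
have [sD tD] : s \notin component_in e S d /\ t \notin component_in e S d.
  by split; apply/negP => /(subsetP (component_in_sub _ _ _)); rewrite !inE eqxx ?orbT.
have [nbr_s nbr_t] := component_adj_poles e_sym e_biconnected st_neq dS.
exists (component_in e S d); first exact: component_in_connected.
split=> //; apply/pred0P => y /=; apply/negbTE/andP => -[yD yC].
by move: dC; rewrite (C_eq yC) (component_in_eq e_sym yD) component_in_id.
Qed.

Lemma component_sub_C (X : {set T}) u :
  [set s; t] \subset X -> u \in C -> component_in e (~: X) u \subset C.
Proof.
move=> stX uC; rewrite (C_eq uC); apply: component_inS; first by rewrite setCS.
exact/component_in_id/(subsetP C_sub).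
Qed.

(* The cycle s v t, closed through another component, has as hub the component of
   u in G - {s, t, v}. *)
Lemma pole_common_nbr_eq v u : v \in C -> e s v -> e t v -> u \in C -> u = v.
Proof.
move=> vC esv etv uC; apply/eqP/contraT => uv; exfalso.
set X := [set s; t; v]; set K := component_in e (~: X) u.
have [sC tC] := poles_notin_C.
have [sv tv su tu] : [/\ s != v, t != v, s != u & t != u].
  by split; [apply: contraNneq sC | apply: contraNneq tC | apply: contraNneq sC |
            apply: contraNneq tC] => ->.
have [sX tX vX] : [/\ s \in X, t \in X & v \in X] by rewrite !inE !eqxx ?orbT.
have uX : u \notin X by rewrite !inE !negb_or uv !(eq_sym u) su tu.
have KC : K \subset C by apply: component_sub_C => //; apply/subsetP => y; rewrite !inE => ->.
have notK y : y \in X -> y \notin K.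
  by move=> yX; apply/negP => /(subsetP (component_in_sub _ _ _)); rewrite inE yX.
have [kt ktK ekt] : exists2 k, k \in K & e t k.
  apply: (component_adj_of_edge e_sym no_transitive_edge esv) => //.
    by rewrite !inE negb_or eq_sym st_neq.
  by apply/subsetP => y; rewrite !inE; case: (y == s); case: (y == t).
have [ks ksK eks] : exists2 k, k \in K & e s k.
  apply: (component_adj_of_edge e_sym no_transitive_edge etv) => //.
    by rewrite !inE negb_or st_neq.
  by apply/subsetP => y; rewrite !inE; case: (y == s); case: (y == t).
have [kv kvK ekv] : exists2 k, k \in K & e k v.
  apply: (component_adj_target (S := S)) uX vX _.
    by move: vC; rewrite (C_eq uC) inE => /andP[].
  by apply/subsetP => y; rewrite !inE; case: (y == s); case: (y == t); rewrite ?andbF.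
have [D cD [DC sD tD [ds dsD eds] [dt dtD edt]]] := other_component.
have [p [gp ipD]] : exists p, gpath e s t p /\ {subset inner s p <= D}.
  by apply: (gpath_through cD sD tD st_neq dsD eds dtD); rewrite e_sym.
have dpK : [disjoint inner s p & K].
  by apply: disjointW DC; [apply/subsetP|].
apply: e_K4_free; apply: (K4_of_cycle_hub e_sym esv _ sv _ st_neq gp _ dpK);
  rewrite 1?e_sym ?notK // 1?eq_sym //.
- by apply: contraL vC => /ipD /(disjointFr DC) ->.
- exact: component_in_connected.
- by exists ks.
- by exists kv; rewrite // e_sym.
- by exists kt.
Qed.

Local Notation Vs := [set v in C | e s v].
Local Notation Vt := [set v in C | e t v].

(* Let L u be the component of u in G - {s, t, a, b}.  If a' lies in L b', then L b'
   is a hub for the cycle a b t closed through another component D and s; otherwise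
   s + D + L a' is a hub for the cycle a b t b'. *)
Lemma no_alternating_path4 a a' b b' :
  a \in Vs -> a' \in Vs -> b \in Vt -> b' \in Vt -> [disjoint Vs & Vt] ->
  a != a' -> b != b' -> e a b -> e a b' -> e b a' -> False.
Proof.
move=> aVs a'Vs bVt b'Vt dV aa' bb' eab eab' eba'.
have [sC tC] := poles_notin_C.
have neC x y : x \in C -> y \notin C -> x != y by move=> xC; apply: contraNneq => <-.
have neV x y : x \in Vs -> y \in Vt -> x != y.
  by move=> xs; apply: contraTneq => <-; rewrite (disjointFr dV xs).
move: (aVs) (a'Vs) (bVt) (b'Vt); rewrite !inE.
move=> /andP[aC esa] /andP[a'C esa'] /andP[bC etb] /andP[b'C etb'].
have [D cD [DC sD tD [ds dsD eds] [dt dtD edt]]] := other_component.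
have notD x : x \in C -> x \notin D by move=> xC; apply: contraL xC => /(disjointFr DC) ->.
set X := [set s; t; a; b]; pose L := component_in e (~: X).
have LC u : u \in C -> L u \subset C.
  by move=> uC; apply: component_sub_C => //; apply/subsetP => y; rewrite !inE => ->.
have notL u y : y \in X -> y \notin L u.
  by move=> yX; apply/negP => /(subsetP (component_in_sub _ _ _)); rewrite inE yX.
have [aX bX tX] : [/\ a \in X, b \in X & t \in X] by rewrite !inE !eqxx ?orbT.
have inL u : u \in C -> u != a -> u != b -> u \in L u.
  move=> uC ua ub; apply: component_in_id.
  by rewrite !inE !negb_or ua ub !andbT neC ?neC.
have b'L1 : b' \in L b' by apply: inL => //; rewrite eq_sym // neV.
have a'L2 : a' \in L a' by apply: inL => //; [rewrite eq_sym | exact: neV].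
have [ab bt a_t] : [/\ a != b, b != t & a != t].
  by split; [exact: neV | exact: neC | exact: neC].
have sD' : [set s] :|: D \subset ~: C.
  by apply/subsetP => y; rewrite !inE => /orP[/eqP->//|/(disjointFr DC)->].
have cSD : connected_on e ([set s] :|: D).
  by apply: (connected_onU e_sym (@connected_on1 _ e s) cD _ dsD eds); rewrite inE.
have hub p (K : {set T}) : gpath e a t p -> b \notin inner a p -> [disjoint inner a p & K] ->
    connected_on e K -> a \notin K -> b \notin K -> t \notin K ->
    (exists2 k, k \in K & e a k) -> (exists2 k, k \in K & e b k) ->
    (exists2 k, k \in K & e t k) -> False.
  move=> gp bp dpK cK aK bK tK na nb nt; apply: e_K4_free.
  by apply: (K4_of_cycle_hub e_sym eab _ ab bt a_t gp bp dpK cK aK bK tK na nb nt); rewrite e_sym.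
case: (boolP (a' \in L b')) => a'L1.
- have [p [gp ipA]] : exists p, gpath e a t p /\ {subset inner a p <= [set s] :|: D}.
    apply: (gpath_through cSD _ _ a_t (k1 := s) _ _ (k2 := dt)); rewrite ?inE ?eqxx ?dtD ?orbT //.
    + by rewrite negb_or (neC _ _ aC sC) notD.
    + by rewrite negb_or eq_sym st_neq tD.
    + by rewrite e_sym.
    + by rewrite e_sym.
  have ipC : {subset inner a p <= ~: C} by move=> y /ipA /(subsetP sD').
  apply: (hub p (L b')) => //; rewrite ?notL //.
  + by apply: contraL bC => /ipC; rewrite inE => ->.
  + apply/pred0P => y /=; apply/negbTE/andP => -[/ipC + /(subsetP (LC _ b'C))].
    by rewrite inE => /negP.
  + exact: component_in_connected.
  + by exists b'.
  + by exists a'.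
  + by exists b'; rewrite // e_sym.
have b'L2 : b' \notin L a'.
  by apply: contra a'L1; rewrite /L => /(component_in_eq e_sym) ->.
have b't : b' != t by apply: neC.
have cK : connected_on e ([set s] :|: D :|: L a').
  apply: (connected_onU e_sym cSD (@component_in_connected _ _ e_sym _ a') _ a'L2 esa').
  by rewrite !inE eqxx.
have notK x : x \in C -> x \in X -> x \notin [set s] :|: D :|: L a'.
  by move=> xC xX; rewrite !in_setU !negb_or in_set1 neC ?notD ?notL.
apply: (hub [:: b'; t] ([set s] :|: D :|: L a')) => //.
- rewrite /gpath /= eab' e_sym etb' eqxx /= !inE !negb_or b't a_t !andbT.
  exact: neV.
- by rewrite /inner /= mem_seq1.
- rewrite /inner /= disjoint_cons disjoint_has /= !in_setU !negb_or in_set1.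
  by rewrite (neC _ _ b'C sC) (notD _ b'C) b'L2.
- exact: notK.
- exact: notK.
- by rewrite !in_setU !negb_or in_set1 eq_sym st_neq tD notL.
- by exists s; rewrite 1?e_sym // !inE eqxx.
- by exists a'; rewrite // inE a'L2 orbT.
- by exists dt; rewrite // !inE dtD orbT.
Qed.

Lemma pole_nbrs_disjoint : 1 < #|C| -> [disjoint Vs & Vt].
Proof.
move=> /card_gt1P[x [y [xC yC xy]]]; apply/pred0P => v /=; rewrite !inE.
apply/negbTE/negP => /andP[/andP[vC esv] /andP[_ etv]]; case/eqP: xy.
by rewrite (pole_common_nbr_eq vC esv etv xC) (pole_common_nbr_eq vC esv etv yC).
Qed.

Lemma Vs_independent : independent e Vs.
Proof.
apply: (nbrs_independent e_sym no_transitive_edge e_K4_free e_irr (w := t)).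
  exact: poles_notin_C.2.
by rewrite eq_sym st_neq.
Qed.

Lemma Vt_independent : independent e Vt.
Proof.
apply: (nbrs_independent e_sym no_transitive_edge e_K4_free e_irr (w := s)).
  exact: poles_notin_C.1.
exact: st_neq.
Qed.

Hypothesis C_light : light e s t C.

Lemma pole_nbrs_cover : Vs :|: Vt = C.
Proof.
apply/setP => v; rewrite !inE -andb_orr; case vC: (v \in C) => //=.
by rewrite e_sym (e_sym t) C_light.
Qed.

Lemma pole_nbrs_single : 1 < #|C| -> (#|Vs| == 1) || (#|Vt| == 1).
Proof.
move=> C2; apply/contraT; rewrite negb_or => /andP[Vs1 Vt1].
have [[cs csC ecs] [ct ctC ect]] := C_adj_poles.
have gt1 (A : {set T}) x : x \in A -> #|A| != 1 -> 1 < #|A|.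
  by move=> xA A1; rewrite ltn_neqAle eq_sym A1 card_gt0; apply/set0Pn; exists x.
have cV : connected_on e (Vs :|: Vt) by rewrite pole_nbrs_cover; apply: C_connected.
have [csVs ctVt] : cs \in Vs /\ ct \in Vt by rewrite !inE csC ctC ecs ect.
have [a [a' [b [b' [[aVs a'Vs bVt b'Vt] [aa' bb' eab eab' eba']]]]]] :=
  alternating_path4 e_sym cV (pole_nbrs_disjoint C2) Vs_independent Vt_independent
    (gt1 _ _ csVs Vs1) (gt1 _ _ ctVt Vt1).
by case: (no_alternating_path4 aVs a'Vs bVt b'Vt (pole_nbrs_disjoint C2) aa' bb' eab eab' eba').
Qed.

Lemma light_component_single : #|C| <= 1 -> exists w, [/\ C = [set w], e s w & e w t].
Proof.
move=> C1; have [[cs csC ecs] [ct ctC ect]] := C_adj_poles.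
have Ccs : C = [set cs] by apply/esym/eqP; rewrite eqEcard sub1set csC cards1.
by exists cs; split=> //; move: ctC; rewrite Ccs inE => /eqP <-; rewrite e_sym.
Qed.

Lemma light_component_fan : 1 < #|C| -> fan_form e s t C \/ fan_form e t s C.
Proof.
move=> C2; have [[cs csC ecs] [ct ctC ect]] := C_adj_poles.
have [sC tC] := poles_notin_C.
have [cut_s cut_t] : connected_on e [set~ s] /\ connected_on e [set~ t].
  by case: e_biconnected => _ cut; split; apply: cut.
case/orP: (pole_nbrs_single C2) => [Vs1|Vt1]; [right|left]; apply: fan_form_of_partition => //.
- by move=> v u vC /(C_nbr vC); rewrite (orbC (u == s)).
- by rewrite disjoint_sym pole_nbrs_disjoint.
- exact: Vt_independent.
- by rewrite setUC pole_nbrs_cover.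
- by apply/set0Pn; exists ct; rewrite inE ctC ect.
- exact: C_nbr.
- exact: pole_nbrs_disjoint.
- exact: Vs_independent.
- exact: pole_nbrs_cover.
- by apply/set0Pn; exists cs; rewrite inE csC ecs.
Qed.
End LightComponent.

Theorem claim6 (T : finType) (e : rel T) (s t : T) (C : {set T}) :
  symmetric e -> irreflexive e ->
  biconnected e -> series_parallel e ->
  (forall u v, ~ transitive_edge e u v) ->
  sep_pair e s t ->
  component_internal e s t C -> light e s t C ->
  ((exists w, [/\ C = [set w], e s w & e w t])
   \/ fan_form e s t C \/ fan_form e t s C) /\
  (1 < #|C| ->
     let Vs := [set v in C | e s v] in
     let Vt := [set v in C | e t v] in
     [/\ [disjoint Vs & Vt], independent e Vs, independent e Vt,
         Vs :|: Vt = C & (#|Vs| == 1) || (#|Vt| == 1)]).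
Proof.
move=> e_sym e_irr e_bic e_sp no_trans st_sep C_comp C_light; split.
  case: (leqP #|C| 1) => [C1|C2].
    by left; apply: light_component_single.
  by right; apply: light_component_fan.
move=> C2 /=; split.
- exact: pole_nbrs_disjoint.
- exact: (Vs_independent e_sym e_irr e_sp no_trans st_sep C_comp).
- exact: (Vt_independent e_sym e_irr e_sp no_trans st_sep C_comp).
- exact: pole_nbrs_cover.
- exact: pole_nbrs_single.
Qed.
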